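(* In an almost zero-dimensional space $X$, every closed $\sigma$C-set is a C-set.
   Context: All spaces are separable and metrizable. A subset $A$ of a space $X$ is a C-set in $X$ if $A$ is an intersection of clopen subsets of $X$; a $\sigma$C-set is a countable union of C-sets in $X$. $X$ is almost zero-dimensional if every point of $X$ has a neighborhood basis consisting of C-sets in $X$. *)

From Stdlib Require Import Reals.
Open Scope R_scope.

Section Topo.
Variable X : Type.
Variable d : X -> X -> R.

Definition is_metric : Prop :=
  (forall x y, 0 <= d x y) /\
  (forall x y, d x y = 0 <-> x = y) /\
  (forall x y, d x y = d y x) /\
  (forall x y z, d x z <= d x y + d y z).

Definition separable : Prop :=
  exists D : X -> Prop,
    (exists f : X -> nat, forall a b, D a -> D b -> f a = f b -> a = b) /\
    (forall x r, 0 < r -> exists y, D y /\ d x y < r).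

Definition is_open (U : X -> Prop) : Prop :=
  forall x, U x -> exists r, 0 < r /\ forall y, d x y < r -> U y.

Definition is_closed (A : X -> Prop) : Prop := is_open (fun x => ~ A x).

Definition is_clopen (A : X -> Prop) : Prop := is_open A /\ is_closed A.

Definition C_set (A : X -> Prop) : Prop :=
  exists F : (X -> Prop) -> Prop,
    (forall U, F U -> is_clopen U) /\
    (forall x, A x <-> (forall U, F U -> U x)).

Definition sigmaC_set (A : X -> Prop) : Prop :=
  exists B : nat -> (X -> Prop),
    (forall n, C_set (B n)) /\
    (forall x, A x <-> exists n, B n x).

Definition neighborhood (x : X) (A : X -> Prop) : Prop :=
  exists r, 0 < r /\ forall y, d x y < r -> A y.

Definition almost_zero_dimensional : Prop :=
  forall x U, is_open U -> U x ->
    exists A, C_set A /\ neighborhood x A /\ (forall y, A y -> U y).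
End Topo.

(* Fix x outside A and a C-set neighbourhood W of x missing A. By Lindelöf,
   countably many C-sets V_i missing A have interiors covering the complement
   of A. Each C-set B_n of A = ⋃ B_n is disjoint from the C-set
   G_n = W ∪ V_0 ∪ ... ∪ V_n, and in a separable metric space two disjoint
   C-sets are separated by a clopen set N_n ⊇ B_n. The union U = ⋃ N_n
   contains A and misses x; it is open, and it is closed because near a point
   outside U (hence outside A, hence inside the interior of some V_i) only the
   finitely many N_n with n < i can appear. So A is the intersection of the
   clopen sets containing it. *)

From Stdlib Require Import Reals Lra Lia Classical ClassicalEpsilon Arith.Cantor.
Open Scope R_scope.

Section MetricSpace.
Variable X : Type.
Variable d : X -> X -> R.

Lemma neighborhood_mono x (S T : X -> Prop) :
  (forall y, S y -> T y) -> neighborhood X d x S -> neighborhood X d x T.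
Proof. intros HST [r [rpos Hr]]. exists r. split; auto. Qed.

Lemma neighborhood_and x (S T : X -> Prop) :
  neighborhood X d x S -> neighborhood X d x T ->
  neighborhood X d x (fun y => S y /\ T y).
Proof.
  intros [r [rpos Hr]] [s [spos Hs]].
  exists (Rmin r s). split; [now apply Rmin_pos|].
  intros y Hy. split.
  - apply Hr. eapply Rlt_le_trans; [exact Hy | apply Rmin_l].
  - apply Hs. eapply Rlt_le_trans; [exact Hy | apply Rmin_r].
Qed.

Lemma neighborhood_finite_avoid (S : nat -> X -> Prop) n x :
  (forall k, is_closed X d (S k)) -> (forall k, (k < n)%nat -> ~ S k x) ->
  neighborhood X d x (fun y => forall k, (k < n)%nat -> ~ S k y).
Proof.
  intros Sclosed. induction n as [|n IH]; intros Hx.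
  - exists 1. split; [lra|]. intros y _ k Hk. lia.
  - apply (neighborhood_mono x (fun y => (forall k, (k < n)%nat -> ~ S k y) /\ ~ S n y)).
    + intros y [Hlt Hn] k Hk. destruct (Nat.eq_dec k n) as [->|Hne]; auto.
      apply Hlt. lia.
    + apply neighborhood_and; [apply IH; auto|apply Sclosed, Hx; lia].
Qed.

Lemma open_union (U : nat -> X -> Prop) :
  (forall n, is_open X d (U n)) -> is_open X d (fun x => exists n, U n x).
Proof.
  intros Uopen x [n Hx]. apply (neighborhood_mono x (U n)); [eauto|exact (Uopen n x Hx)].
Qed.

Lemma clopen_empty : is_clopen X d (fun _ => False).
Proof.
  split.
  - intros x [].
  - intros x _. exists 1. split; [lra|]. intros y _ [].
Qed.

Lemma clopen_compl (U : X -> Prop) :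
  is_clopen X d U -> is_clopen X d (fun x => ~ U x).
Proof.
  intros [Uopen Uclosed]. split; [exact Uclosed|].
  intros x Hx. apply NNPP in Hx.
  apply (neighborhood_mono x U); [tauto|exact (Uopen x Hx)].
Qed.

Lemma clopen_union (U V : X -> Prop) :
  is_clopen X d U -> is_clopen X d V -> is_clopen X d (fun x => U x \/ V x).
Proof.
  intros [Uopen Uclosed] [Vopen Vclosed]. split.
  - intros x [Ux|Vx].
    + apply (neighborhood_mono x U); [tauto|exact (Uopen x Ux)].
    + apply (neighborhood_mono x V); [tauto|exact (Vopen x Vx)].
  - intros x Hx.
    apply (neighborhood_mono x (fun y => ~ U y /\ ~ V y)); [tauto|].
    apply neighborhood_and; [apply Uclosed | apply Vclosed]; tauto.
Qed.

Lemma open_partition_union_clopen (P : nat -> X -> Prop) (J : nat -> Prop) :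
  (forall n, is_open X d (P n)) -> (forall x, exists n, P n x) ->
  (forall m n x, P m x -> P n x -> m = n) ->
  is_clopen X d (fun x => exists n, J n /\ P n x).
Proof.
  intros Popen Pcover Pdisj. split.
  - apply open_union. intros n x [Jn Px].
    apply (neighborhood_mono x (P n)); [auto|exact (Popen n x Px)].
  - intros x Hx. destruct (Pcover x) as [n Px].
    apply (neighborhood_mono x (P n)); [|exact (Popen n x Px)].
    intros y Py [m [Jm Pmy]]. rewrite (Pdisj m n y Pmy Py) in Jm. eauto.
Qed.

Definition disjointed (S : nat -> X -> Prop) n x : Prop :=
  S n x /\ forall k, (k < n)%nat -> ~ S k x.

Lemma disjointed_open (S : nat -> X -> Prop) n :
  (forall k, is_clopen X d (S k)) -> is_open X d (disjointed S n).
Proof.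
  intros Sclopen x [Sx Hlt]. apply neighborhood_and.
  - apply (Sclopen n). exact Sx.
  - apply neighborhood_finite_avoid; [intro k; apply Sclopen|exact Hlt].
Qed.

Lemma disjointed_cover (S : nat -> X -> Prop) n x :
  S n x -> exists m, disjointed S m x.
Proof.
  intros Sx.
  destruct (Wf_nat.dec_inh_nat_subset_has_unique_least_element (fun k => S k x))
    as [m [[Sm Hleast] _]]; [intro; apply classic|eauto|].
  exists m. split; [exact Sm|]. intros k Hk Sk. specialize (Hleast k Sk). lia.
Qed.

Lemma disjointed_unique (S : nat -> X -> Prop) m n x :
  disjointed S m x -> disjointed S n x -> m = n.
Proof.
  intros [Sm Hm] [Sn Hn].
  destruct (Nat.lt_total m n) as [Hlt|[Heq|Hlt]];
    [exfalso; exact (Hn m Hlt Sm)|exact Heq|exfalso; exact (Hm n Hlt Sn)].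
Qed.

Lemma clopen_union_locally_finite (N : nat -> X -> Prop) :
  (forall n, is_clopen X d (N n)) ->
  (forall x, ~ (exists n, N n x) ->
     exists i, neighborhood X d x (fun y => forall n, (i <= n)%nat -> ~ N n y)) ->
  is_clopen X d (fun x => exists n, N n x).
Proof.
  intros Nclopen Hlocal. split.
  - apply open_union. intro n. apply Nclopen.
  - intros x Hx. destruct (Hlocal x Hx) as [i Htail].
    apply (neighborhood_mono x (fun y => (forall n, (i <= n)%nat -> ~ N n y) /\
                                         forall n, (n < i)%nat -> ~ N n y)).
    + intros y [Hge Hlt] [n Ny]. destruct (Nat.lt_ge_cases n i); [eapply Hlt|eapply Hge]; eauto.
    + apply neighborhood_and; [exact Htail|].
      apply neighborhood_finite_avoid; [intro n; apply Nclopen|eauto].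
Qed.

Lemma C_set_iff_separation (A : X -> Prop) :
  C_set X d A <->
  forall x, ~ A x -> exists U, is_clopen X d U /\ (forall y, A y -> U y) /\ ~ U x.
Proof.
  split.
  - intros [F [Fclopen HA]] x Hx.
    apply NNPP. intro Hnone. apply Hx, HA. intros U FU. apply NNPP. intro Ux.
    apply Hnone. exists U. split; [auto|]. split; [|exact Ux].
    intros y Ay. exact (proj1 (HA y) Ay U FU).
  - intros Hsep. exists (fun U => is_clopen X d U /\ forall y, A y -> U y).
    split; [tauto|]. intro x. split.
    + intros Ax U [_ HU]. auto.
    + intros Hall. apply NNPP. intro Hx.
      destruct (Hsep x Hx) as [U [Uclopen [HAU Ux]]]. apply Ux, Hall. auto.
Qed.

Lemma C_set_ext (A B : X -> Prop) :
  (forall y, A y <-> B y) -> C_set X d A -> C_set X d B.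
Proof.
  intros HAB [F [Fclopen HA]]. exists F. split; [exact Fclopen|].
  intro x. rewrite <- HAB. apply HA.
Qed.

Lemma C_set_empty : C_set X d (fun _ => False).
Proof.
  apply C_set_iff_separation. intros x _.
  exists (fun _ => False). split; [apply clopen_empty|tauto].
Qed.

Lemma C_set_union (A B : X -> Prop) :
  C_set X d A -> C_set X d B -> C_set X d (fun y => A y \/ B y).
Proof.
  rewrite !C_set_iff_separation. intros HA HB x Hx.
  destruct (HA x) as [U [Uclopen [HAU Ux]]]; [tauto|].
  destruct (HB x) as [V [Vclopen [HBV Vx]]]; [tauto|].
  exists (fun y => U y \/ V y). split; [apply clopen_union; auto|].
  split; [intros y [Ay|By]; auto|tauto].
Qed.

Lemma C_set_finite_union (W : nat -> X -> Prop) n :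
  (forall i, C_set X d (W i)) -> C_set X d (fun y => exists i, (i <= n)%nat /\ W i y).
Proof.
  intros WC. induction n as [|n IH].
  - apply (C_set_ext (W 0%nat)); [|apply WC].
    intro y. split; [eauto|]. intros [i [Hi Wy]].
    replace i with 0%nat in Wy by lia. exact Wy.
  - apply (C_set_ext (fun y => (exists i, (i <= n)%nat /\ W i y) \/ W (S n) y)).
    + intro y. split.
      * intros [[i [Hi Wy]]|Wy]; [exists i|exists (S n)]; split; auto; lia.
      * intros [i [Hi Wy]]. destruct (Nat.eq_dec i (S n)) as [->|Hne]; [now right|].
        left. exists i. split; [lia|exact Wy].
    + apply C_set_union; auto.
Qed.

Hypothesis hmet : is_metric X d.

Lemma neighborhood_mem x (S : X -> Prop) : neighborhood X d x S -> S x.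
Proof.
  intros [r [rpos Hr]]. apply Hr.
  destruct hmet as [_ [dzero _]]. rewrite (proj2 (dzero x x) eq_refl). exact rpos.
Qed.

Hypothesis hsep : separable X d.

Lemma countable_subcover (P : (X -> Prop) -> Prop) (Q : X -> Prop) :
  P (fun _ => False) ->
  (forall z, Q z -> exists S, P S /\ neighborhood X d z S) ->
  exists S : nat -> X -> Prop,
    (forall n, P (S n)) /\ forall z, Q z -> exists n, neighborhood X d z (S n).
Proof.
  intros P0 Hloc.
  destruct hmet as [_ [_ [dsym dtri]]].
  destruct hsep as [D [[code code_inj] Ddense]].
  (* Index by (code q, N): the members of P containing the ball of radius 1/N
     about the dense point q. *)
  set (good := fun (p : nat * nat) (S : X -> Prop) =>
     P S /\ exists q, D q /\ code q = fst p /\ forall y, d q y < / INR (snd p) -> S y).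
  assert (Hpick : forall n, exists S, P S /\ (good (of_nat n) S \/ ~ exists S, good (of_nat n) S)).
  { intro n. destruct (classic (exists S, good (of_nat n) S)) as [[S HS]|HS].
    - exists S. split; [apply HS|now left].
    - exists (fun _ => False). split; [exact P0|now right]. }
  destruct (choice _ Hpick) as [S HS].
  exists S. split; [intro n; apply HS|].
  intros z Qz. destruct (Hloc z Qz) as [T [PT [r [rpos Hr]]]].
  destruct (archimed_cor1 (r / 2)) as [N [HN Npos]]; [lra|].
  assert (HNpos : 0 < / INR N) by (apply Rinv_0_lt_compat, lt_0_INR, Npos).
  destruct (Ddense z (/ INR N) HNpos) as [q [Dq Hq]].
  exists (to_nat (code q, N)).
  destruct (HS (to_nat (code q, N))) as [_ [Hgood|Hnone]]; rewrite cancel_of_to in *.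
  - destruct Hgood as [_ [q' [Dq' [Hcode Hball]]]]. simpl in Hcode, Hball.
    replace q' with q in Hball by (apply code_inj; auto).
    exists (/ INR N - d z q). split; [lra|].
    intros y Hy. apply Hball. specialize (dtri q z y). rewrite (dsym q z) in dtri. lra.
  - exfalso. apply Hnone. exists T. split; [exact PT|].
    exists q. split; [exact Dq|]. split; [reflexivity|].
    intros y Hy. apply Hr. simpl in Hy. specialize (dtri z q y). lra.
Qed.

Lemma C_set_clopen_separation (B G : X -> Prop) :
  C_set X d B -> C_set X d G -> (forall y, B y -> ~ G y) ->
  exists N, is_clopen X d N /\ (forall y, B y -> N y) /\ (forall y, N y -> ~ G y).
Proof.
  intros BC GC Hdisj.
  destruct (countable_subcover
     (fun S => is_clopen X d S /\ ((forall y, S y -> ~ B y) \/ (forall y, S y -> ~ G y)))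
     (fun _ => True)) as [S [HS Scover]].
  { split; [apply clopen_empty|left; tauto]. }
  { intros z _.
    assert (Hsep : forall E, C_set X d E -> ~ E z ->
              exists V, is_clopen X d V /\ (forall y, V y -> ~ E y) /\ neighborhood X d z V).
    { intros E EC Ez. destruct (proj1 (C_set_iff_separation E) EC z Ez) as [U [Uclopen [HEU Uz]]].
      exists (fun y => ~ U y). split; [now apply clopen_compl|]. split; [auto|].
      exact (proj1 (clopen_compl U Uclopen) z Uz). }
    destruct (classic (B z)) as [Bz|Bz].
    - destruct (Hsep G GC (Hdisj z Bz)) as [V [Vclopen [HV Vz]]]. eauto.
    - destruct (Hsep B BC Bz) as [V [Vclopen [HV Vz]]]. eauto. }
  assert (Hcover : forall x, exists n, disjointed S n x).
  { intro x. destruct (Scover x I) as [n Hn].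
    exact (disjointed_cover S n x (neighborhood_mem x (S n) Hn)). }
  exists (fun x => exists n, (forall y, S n y -> ~ G y) /\ disjointed S n x).
  split; [|split].
  - apply open_partition_union_clopen; [|exact Hcover|exact (disjointed_unique S)].
    intro n. apply disjointed_open. intro k. apply HS.
  - intros y By. destruct (Hcover y) as [n Hn]. exists n. split; [|exact Hn].
    destruct (HS n) as [_ [HnB|HnG]]; [exfalso; exact (HnB y (proj1 Hn) By)|exact HnG].
  - intros y [n [HnG Hn]]. exact (HnG y (proj1 Hn)).
Qed.

Lemma closed_sigmaC_set_separation (A : X -> Prop) :
  almost_zero_dimensional X d -> is_closed X d A -> sigmaC_set X d A ->
  forall x, ~ A x -> exists U, is_clopen X d U /\ (forall y, A y -> U y) /\ ~ U x.
Proof.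
  intros hazd Aclosed [B [BC HB]] x Ax.
  destruct (hazd x (fun y => ~ A y) Aclosed Ax) as [W [WC [Wx HWA]]].
  destruct (countable_subcover (fun V => C_set X d V /\ forall y, V y -> ~ A y)
       (fun z => ~ A z)) as [V [HV Vcover]].
  { split; [apply C_set_empty|tauto]. }
  { intros z Az. destruct (hazd z (fun y => ~ A y) Aclosed Az) as [Vz [VzC [Hz HVz]]]. eauto. }
  set (G := fun n y => W y \/ exists i, (i <= n)%nat /\ V i y).
  assert (HN : forall n, exists N, is_clopen X d N /\ (forall y, B n y -> N y) /\
                                   (forall y, N y -> ~ G n y)).
  { intro n. apply C_set_clopen_separation; [apply BC| |].
    - apply C_set_union; [exact WC|]. apply C_set_finite_union. intro i. apply HV.
    - intros y Bny [Wy|[i [_ Viy]]]; [apply (HWA y Wy)|apply (proj2 (HV i) y Viy)];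
        apply HB; eauto. }
  destruct (choice _ HN) as [N HNn].
  assert (HAN : forall y, A y -> exists n, N n y).
  { intros y Ay. destruct (proj1 (HB y) Ay) as [n Bny]. exists n. apply HNn, Bny. }
  exists (fun y => exists n, N n y). split; [|split; [exact HAN|]].
  - apply clopen_union_locally_finite; [intro n; apply HNn|].
    intros y Hy. destruct (Vcover y) as [i Hi]; [intro Ay; apply Hy; auto|].
    exists i. apply (neighborhood_mono y (V i)); [|exact Hi].
    intros z Viz n Hn Nz. apply (proj2 (proj2 (HNn n)) z Nz). right. eauto.
  - intros [n Nx]. apply (proj2 (proj2 (HNn n)) x Nx). left.
    exact (neighborhood_mem x W Wx).
Qed.

End MetricSpace.

Theorem theorem4p4 (X : Type) (d : X -> X -> R)
  (hmet : is_metric X d) (hsep : separable X d)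
  (hazd : almost_zero_dimensional X d)
  (A : X -> Prop) (hcl : is_closed X d A) (hsc : sigmaC_set X d A) :
  C_set X d A.
Proof.
  apply C_set_iff_separation.
  exact (closed_sigmaC_set_separation X d hmet hsep A hazd hcl hsc).
Qed.
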